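(* Let $\mathbb{X},\mathbb{Y}$ be two-dimensional smooth real Banach spaces, with $\mathbb{Y}$ in addition strictly convex. Let $T\in\mathbb{L}(\mathbb{X},\mathbb{Y})$ have rank two, $\|T\|=1$ and $M_T=\{\pm x\}$. Let $y\in x^\perp\cap S_{\mathbb{X}}$; then $0<\|Ty\|<1$, and set $w=Ty/\|Ty\|$. Then $T$ is not an extreme contraction if and only if $(x,Tx)$ is a $\mu$-CPP with respect to the pair $(y,w)$ for some $\mu>\|Ty\|$.
   Context: $M_T=\{x\in S_{\mathbb{X}}:\|Tx\|=\|T\|\}$. A norm one $T$ is an extreme contraction if it is an extreme point of the closed unit ball of $\mathbb{L}(\mathbb{X},\mathbb{Y})$. $B(x,r)=\{u:\|u-x\|<r\}$. $x\perp_B y$ means $\|x+\lambda y\|\ge\|x\|$ for all real $\lambda$; $x^\perp=\{y:x\perp_By\}$. For $x\in S_{\mathbb{X}}$, $y'\in S_{\mathbb{Y}}$, $z_0\in x^\perp\cap S_{\mathbb{X}}$, $w_0\in y'^\perp\cap S_{\mathbb{Y}}$ and $\mu>0$, $(x,y')$ is a $\mu$-CPP with respect to $(z_0,w_0)$ if there exists $r>0$ such that for all $a,b\in\mathbb{R}$, $ax+bz_0\in B(x,r)\cap S_{\mathbb{X}}$ implies $\|ay'+b\mu w_0\|\le1$. *)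

From HB Require Import structures.
From mathcomp Require Import all_boot all_order all_algebra.
From mathcomp Require Import all_classical all_reals all_analysis.
Set Implicit Arguments. Unset Strict Implicit. Unset Printing Implicit Defensive.
Import Order.TTheory GRing.Theory Num.Theory.
Import numFieldNormedType.Exports.
Local Open Scope classical_set_scope.
Local Open Scope ring_scope.

Section Defs.
Variable R : realType.

Definition is_linear_map (X Y : normedModType R) (T : X -> Y) : Prop :=
  forall (a : R) (u v : X), T (a *: u + v) = a *: T u + T v.

Definition is_linear_functional (X : normedModType R) (f : X -> R) : Prop :=
  forall (a : R) (u v : X), f (a *: u + v) = a * f u + f v.

Definition lin_indep2 (X : normedModType R) (u v : X) : Prop :=
  forall a b : R, a *: u + b *: v = 0 -> a = 0 /\ b = 0.

Definition dim_two (X : normedModType R) : Prop :=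
  exists e1 e2 : X, lin_indep2 e1 e2 /\
    forall z : X, exists a b : R, z = a *: e1 + b *: e2.

Definition supporting_functional (X : normedModType R) (x : X) (f : X -> R) : Prop :=
  is_linear_functional f /\ (forall z : X, `|f z| <= `|z|) /\ f x = 1.

Definition smooth (X : normedModType R) : Prop :=
  forall x : X, `|x| = 1 ->
    forall f g : X -> R, supporting_functional x f -> supporting_functional x g -> f = g.

Definition strictly_convex (X : normedModType R) : Prop :=
  forall x y : X, `|x| = 1 -> `|y| = 1 -> x <> y -> `|(2%:R)^-1 *: (x + y)| < 1.

Definition opnorm (X Y : normedModType R) (T : X -> Y) : R :=
  sup [set `|T z| | z in [set z : X | `|z| = 1]].

Definition norm_attainment_set (X Y : normedModType R) (T : X -> Y) : set X :=
  [set z : X | `|z| = 1 /\ `|T z| = opnorm T].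

Definition rank_two (X Y : normedModType R) (T : X -> Y) : Prop :=
  (exists u v : X, lin_indep2 (T u) (T v)) /\
  (forall u v w : X, exists a b c : R, (a != 0 \/ b != 0 \/ c != 0) /\
      a *: T u + b *: T v + c *: T w = 0).

Definition extreme_contraction (X Y : normedModType R) (T : X -> Y) : Prop :=
  opnorm T = 1 /\
  forall (T1 T2 : X -> Y) (t : R),
    is_linear_map T1 -> is_linear_map T2 ->
    opnorm T1 <= 1 -> opnorm T2 <= 1 -> 0 < t < 1 ->
    T = (fun z => t *: T1 z + (1 - t) *: T2 z) -> T1 = T2.

Definition BJ_orth (X : normedModType R) (x y : X) : Prop :=
  forall lambda : R, `|x| <= `|x + lambda *: y|.

Definition mu_CPP (X Y : normedModType R) (x : X) (y' : Y) (z0 : X) (w0 : Y)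
    (mu : R) : Prop :=
  [/\ `|x| = 1, `|y'| = 1, BJ_orth x z0 /\ `|z0| = 1,
      BJ_orth y' w0 /\ `|w0| = 1 & 0 < mu] /\
  exists r : R, 0 < r /\
    forall a b : R,
      `|a *: x + b *: z0 - x| < r -> `|a *: x + b *: z0| = 1 ->
      `|a *: y' + (b * mu) *: w0| <= 1.

End Defs.

From HB Require Import structures.
From mathcomp Require Import all_boot all_order all_algebra.
From mathcomp Require Import all_classical all_reals all_analysis.
From mathcomp Require Import ring lra.
Import Order.TTheory GRing.Theory Num.Theory.
Import numFieldNormedType.Exports.
Local Open Scope classical_set_scope.
Local Open Scope ring_scope.
Set Implicit Arguments. Unset Strict Implicit. Unset Printing Implicit Defensive.

(* If [T = t T1 + (1 - t) T2] with [T1 <> T2] in the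
   unit ball, strict convexity of [Y] forces [T1 x = T2 x = T x], and smoothness
   of [X] and [Y] forces [Ti y = be_i T y] for scalars with
   [t be_1 + (1 - t) be_2 = 1]; so some [be_i > 1] and [Ti] witnesses the CPP
   with [mu = be_i |T y|].
   Conversely, [M_T = {x, -x}] makes [|T z| < |z|] off the line through [x],
   with a uniform gap on the compact set of directions away from [x]; near [x]
   the CPP leaves the room [mu > |T y|].  Hence sending [y] to
   [(|T y| +- e) w] instead of [T y] gives, for small [e], two distinct maps of
   norm at most one whose average is [T]. *)

Section TwoDimensional.
Variables (R : realType) (X Y : normedModType R).
Implicit Types (T : X -> Y) (u v z : X) (a b : R).

Lemma lin_map0 T : is_linear_map T -> T 0 = 0.
Proof.
move=> lT; have := lT 1 0 0; rewrite scaler0 addr0 scale1r => E.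
by apply: (@addrI _ (T 0)); rewrite addr0 -E.
Qed.

Lemma lin_mapD T u v : is_linear_map T -> T (u + v) = T u + T v.
Proof. by move=> lT; have := lT 1 u v; rewrite !scale1r. Qed.

Lemma lin_mapZ T a u : is_linear_map T -> T (a *: u) = a *: T u.
Proof. by move=> lT; rewrite -[a *: u]addr0 lT lin_map0 // addr0. Qed.

Lemma lin_map_comb T a b u v :
  is_linear_map T -> T (a *: u + b *: v) = a *: T u + b *: T v.
Proof. by move=> lT; rewrite lT lin_mapZ. Qed.

Lemma scale_combD (p q : X) a b a' b' :
  (a *: p + b *: q) + (a' *: p + b' *: q) = (a + a') *: p + (b + b') *: q.
Proof. by rewrite addrACA -!scalerDl. Qed.

Lemma scale_combE (V : lmodType R) (p q : V) a b :
  a != 0 -> a *: p + b *: q = a *: (p + (b / a) *: q).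
Proof. by move=> a0; rewrite scalerDr scalerA mulrCA mulfV // mulr1. Qed.

Lemma lin_indep2_coefP u v a b c d :
  lin_indep2 u v -> a *: u + b *: v = c *: u + d *: v -> a = c /\ b = d.
Proof.
move=> H E.
have : (a - c) *: u + (b - d) *: v = 0.
  by rewrite !scalerBl addrACA E -opprD subrr.
by move/H => [/eqP + /eqP]; rewrite !subr_eq0 => /eqP -> /eqP ->.
Qed.

Lemma lin_indep2_neq0 u v : lin_indep2 u v -> u != 0.
Proof.
move=> H; apply/eqP => u0; have [] := H 1 0.
  by rewrite u0 scaler0 scale0r addr0.
by move/eqP; rewrite oner_eq0.
Qed.

Lemma dim_two_span u v :
  dim_two X -> lin_indep2 u v -> forall z, exists a b, z = a *: u + b *: v.
Proof.
move=> [e1 [e2 [_ He]]] Huv z.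
have [p1 [p2 Hu]] := He u; have [q1 [q2 Hv]] := He v.
have [al [be Hz]] := He z.
have comb a b :
    a *: u + b *: v = (a * p1 + b * q1) *: e1 + (a * p2 + b * q2) *: e2.
  by rewrite Hu Hv !scalerDr !scalerA scale_combD.
have Hd : p1 * q2 - p2 * q1 != 0.
  apply/eqP => Hd.
  have [q20 p20] : q2 = 0 /\ - p2 = 0.
    apply: Huv; rewrite comb.
    have -> : q2 * p1 + - p2 * q1 = 0 by rewrite -Hd; ring.
    by rewrite (_ : q2 * p2 + - p2 * q2 = 0) ?scale0r ?addr0 //; ring.
  have [q10 p10] : q1 = 0 /\ - p1 = 0.
    apply: Huv; rewrite comb.
    have -> : q1 * p2 + - p1 * q2 = 0 by rewrite -oppr0 -Hd; ring.
    by rewrite (_ : q1 * p1 + - p1 * q1 = 0) ?scale0r ?addr0 //; ring.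
  move/lin_indep2_neq0/eqP: Huv; apply.
  by rewrite Hu -[p1]opprK -[p2]opprK p10 p20 oppr0 !scale0r addr0.
exists ((al * q2 - be * q1) / (p1 * q2 - p2 * q1)).
exists ((be * p1 - al * p2) / (p1 * q2 - p2 * q1)).
by rewrite Hz comb; congr (_ *: _ + _ *: _); field.
Qed.

Record coordinates u v (fu fv : X -> R) : Prop := Coordinates {
  coordE : forall z, z = fu z *: u + fv z *: v;
  coord_linu : is_linear_functional fu;
  coord_linv : is_linear_functional fv;
  coord_uu : fu u = 1;
  coord_vu : fv u = 0;
  coord_uv : fu v = 0;
  coord_vv : fv v = 1 }.

Lemma dim_two_coordinates u v :
  dim_two X -> lin_indep2 u v -> exists fu fv, coordinates u v fu fv.
Proof.
move=> d2 H.
have /choice [f Hf] : forall z, exists p : R * R, z = p.1 *: u + p.2 *: v.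
  by move=> z; have [a [b ->]] := dim_two_span d2 H z; exists (a, b).
have linf a z w : (f (a *: z + w)).1 = a * (f z).1 + (f w).1 /\
                  (f (a *: z + w)).2 = a * (f z).2 + (f w).2.
  apply: (lin_indep2_coefP H); rewrite -Hf {1}(Hf z) {1}(Hf w).
  by rewrite scalerDr !scalerA scale_combD.
have [fu1 fv1] : (f u).1 = 1 /\ (f u).2 = 0.
  by apply: (lin_indep2_coefP H); rewrite -Hf scale1r scale0r addr0.
have [fu2 fv2] : (f v).1 = 0 /\ (f v).2 = 1.
  by apply: (lin_indep2_coefP H); rewrite -Hf scale1r scale0r add0r.
exists (fun z => (f z).1), (fun z => (f z).2); split => //.
- by move=> a z w; case: (linf a z w).
- by move=> a z w; case: (linf a z w).
Qed.

Lemma coord_lin_mapE T u v fu fv :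
  coordinates u v fu fv -> is_linear_map T ->
  forall z, T z = fu z *: T u + fv z *: T v.
Proof. by move=> c lT z; rewrite {1}(coordE c z) lin_map_comb. Qed.

Lemma coord_lin_map u v fu fv (p q : Y) :
  coordinates u v fu fv -> is_linear_map (fun z => fu z *: p + fv z *: q).
Proof.
move=> c a z w; rewrite (coord_linu c) (coord_linv c) !scalerDl scalerDr !scalerA.
by rewrite addrACA.
Qed.

End TwoDimensional.

Definition nonexpansive (R : realType) (X Y : normedModType R) (S : X -> Y) :=
  forall z, `|S z| <= `|z|.

Section Orthogonality.
Variables (R : realType) (X : normedModType R).
Implicit Types (a b : R).

Lemma norm1_neq0 (v : X) : `|v| = 1 -> v != 0.
Proof. by move=> nv; rewrite -normr_eq0 nv oner_eq0. Qed.

Lemma BJ_orth_coef (x v : X) a b :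
  `|x| = 1 -> BJ_orth x v -> `|a| <= `|a *: x + b *: v|.
Proof.
move=> nx H; have [->|a0] := eqVneq a 0; first by rewrite normr0.
by rewrite scale_combE // normrZ -{1}[`|a|]mulr1 ler_wpM2l // -nx.
Qed.

Lemma BJ_orthZ (x v : X) c : BJ_orth x v -> BJ_orth x (c *: v).
Proof. by move=> H l; rewrite scalerA. Qed.

Lemma BJ_orth_lin_indep2 (x v : X) :
  `|x| = 1 -> BJ_orth x v -> v != 0 -> lin_indep2 x v.
Proof.
move=> nx H v0 a b E.
have a0 : a = 0.
  apply/normr0_eq0/le_anti; rewrite normr_ge0 andbT.
  by rewrite -(normr0 X) -E BJ_orth_coef.
split => //; move: E; rewrite a0 scale0r add0r => /eqP.
by rewrite scaler_eq0 (negbTE v0) orbF => /eqP.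
Qed.

Lemma BJ_orth_coord_supporting (x v : X) fx fv :
  `|x| = 1 -> BJ_orth x v -> coordinates x v fx fv -> supporting_functional x fx.
Proof.
move=> nx bj c; split; first exact: coord_linu c.
split=> [z|]; last exact: coord_uu c.
by rewrite {2}(coordE c z); exact: BJ_orth_coef.
Qed.

Lemma norm_growth_coef_bound (x v : X) (k c : R) :
  `|x| = 1 -> BJ_orth x v ->
  (forall l, 0 <= l -> 1 + k * l <= `|x + l *: v|) ->
  0 < c -> c <= k -> c <= `|v| ->
  forall a b, `|a + c * b| <= `|a *: x + b *: v|.
Proof.
move=> nx bj grow c0 ck cv.
suff half a b : a + c * b <= `|a *: x + b *: v|.
  move=> a b; rewrite ler_norml half andbT.
  by have := half (- a) (- b); rewrite !scaleNr -opprD normrN; lra.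
have [a0|a0] := ltrP 0 a; have [b0|b0] := ltrP b 0.
- have := BJ_orth_coef a b nx bj; rewrite gtr0_norm //; nra.
- rewrite scale_combE ?gt_eqF // normrZ gtr0_norm //.
  have := grow (b / a) (divr_ge0 b0 (ltW a0)).
  rewrite -(ler_pM2l a0) (_ : a * (1 + k * (b / a)) = a + k * b); last first.
    by field; rewrite gt_eqF.
  nra.
- have := normr_ge0 (a *: x + b *: v); nra.
- have : `|b *: v| <= `|a *: x + b *: v| + `|a *: x|.
    by rewrite -{1}[b *: v](addKr (a *: x)) addrC ler_normB.
  rewrite !normrZ nx mulr1 ger0_norm // ler0_norm //; nra.
Qed.

(* A component of [q] along [e] would tilt the coordinate functional [fe] into
   a second supporting functional at [e]. *)
Lemma smooth_BJ_orth_line (e p q : X) :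
  dim_two X -> smooth X -> `|e| = 1 -> BJ_orth e p -> BJ_orth e q -> p != 0 ->
  exists be : R, q = be *: p.
Proof.
move=> d2 smX ne bjp bjq p0.
have [fe [fp c]] := dim_two_coordinates d2 (BJ_orth_lin_indep2 ne bjp p0).
have Hq := coordE c q; set al := fe q in Hq; set be := fp q in Hq.
suff al0 : al = 0 by exists be; rewrite Hq al0 scale0r add0r.
have [be0|be0] := eqVneq be 0.
  apply/eqP; apply: contraT => al0.
  have := bjq (- al^-1).
  rewrite Hq be0 scale0r addr0 scalerA mulNr mulVf // scaleN1r subrr normr0 ne.
  by rewrite ler10.
have sf : supporting_functional e (fun z => fe z - al / be * fp z).
  split; first by move=> a u w; rewrite (coord_linu c) (coord_linv c); ring.
  split=> [z|]; last by rewrite (coord_uu c) (coord_vu c) mulr0 subr0.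
  have Ez : z = (fe z - al / be * fp z) *: e + (fp z / be) *: q.
    rewrite {1}(coordE c z) Hq scalerDr !scalerA addrA -scalerDl.
    by congr (_ *: _ + _ *: _); field.
  by rewrite [X in _ <= `|X|]Ez; exact: BJ_orth_coef.
have := smX e ne _ _ (BJ_orth_coord_supporting ne bjp c) sf.
move=> /(congr1 (fun f => f p)); rewrite (coord_uv c) (coord_vv c) mulr1 sub0r.
move/eqP; rewrite eq_sym oppr_eq0 mulf_eq0 invr_eq0 (negbTE be0) orbF.
by move/eqP.
Qed.

End Orthogonality.

Section NonexpansiveMaps.
Variables (R : realType) (X Y : normedModType R).
Implicit Types (S : X -> Y).

Lemma nonexpansive_norm_growth S (x v : X) :
  is_linear_map S -> nonexpansive S -> `|S x| = 1 ->
  forall l, 0 <= l -> 1 + (1 - `|S x - S v|) * l <= `|x + l *: v|.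
Proof.
move=> lS bS nSx l l0.
have E : (1 + l) *: S x = S (x + l *: v) + l *: (S x - S v).
  rewrite lin_mapD // (lin_mapZ l v lS) scalerBr addrA addrAC addrK.
  by rewrite scalerDl scale1r.
have := ler_normD (S (x + l *: v)) (l *: (S x - S v)).
rewrite -E !normrZ nSx mulr1 (ger0_norm l0) ger0_norm; last lra.
have := bS (x + l *: v); nra.
Qed.

(* If [|S x + l0 S y| < 1], the norm of [X] grows linearly from [x] in the
   direction [v = - l0 y] ([nonexpansive_norm_growth]), so that [fx + e fv]
   is a supporting functional at [x] besides the coordinate functional [fx]. *)
Lemma smooth_nonexpansive_BJ_orth S (x y : X) :
  dim_two X -> smooth X -> is_linear_map S -> nonexpansive S ->
  `|x| = 1 -> `|S x| = 1 -> BJ_orth x y -> y != 0 -> BJ_orth (S x) (S y).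
Proof.
move=> d2 smX lS bS nx nSx bj y0 l0.
rewrite nSx; apply: contrapT => /negP; rewrite -ltNge => hl.
have l00 : l0 != 0 by apply: contraTneq hl => ->; rewrite scale0r addr0 nSx ltxx.
set v := (- l0) *: y.
have v0 : v != 0 by rewrite scaler_eq0 negb_or oppr_eq0 l00 y0.
have bjv : BJ_orth x v by exact: BJ_orthZ.
set k := 1 - `|S x - S v|.
have k0 : 0 < k by rewrite /k subr_gt0 /v lin_mapZ // scaleNr opprK.
have [fx [fv c]] := dim_two_coordinates d2 (BJ_orth_lin_indep2 nx bjv v0).
set e := Num.min k `|v|.
have e0 : 0 < e by rewrite lt_min k0 normr_gt0.
have sf : supporting_functional x (fun z => fx z + e * fv z).
  split; first by move=> a u w; rewrite (coord_linu c) (coord_linv c); ring.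
  split=> [z|]; last by rewrite (coord_uu c) (coord_vu c) mulr0 addr0.
  rewrite [X in _ <= `|X|](coordE c z) /=.
  have grow := nonexpansive_norm_growth v lS bS nSx.
  apply: (norm_growth_coef_bound nx bjv grow) => //.
  - by rewrite ge_min lexx.
  - by rewrite ge_min lexx orbT.
have := smX x nx _ _ (BJ_orth_coord_supporting nx bjv c) sf.
move=> /(congr1 (fun f => f v)); rewrite (coord_uv c) (coord_vv c) mulr1 add0r.
by move=> e00; move: e0; rewrite -e00 ltxx.
Qed.

End NonexpansiveMaps.

Lemma strictly_convex_comb_norm1 (R : realType) (X : normedModType R)
    (u v : X) t :
  strictly_convex X -> `|u| <= 1 -> `|v| <= 1 -> 0 < t < 1 ->
  `|t *: u + (1 - t) *: v| = 1 -> u = v.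
Proof.
move=> sc nu nv /andP[t0 t1] n1.
have tri := ler_normD (t *: u) ((1 - t) *: v).
rewrite n1 !normrZ (gtr0_norm t0) (gtr0_norm (_ : 0 < 1 - t)) in tri; last lra.
have {}nu : `|u| = 1 by apply/le_anti; rewrite nu /=; nra.
have {}nv : `|v| = 1 by apply/le_anti; rewrite nv /=; nra.
wlog th : u v t nu nv t0 t1 n1 {tri} / t <= 2^-1.
  move=> W; have [|th] := lerP t 2^-1; first exact: W.
  apply/esym/(W v u (1 - t)) => //; try lra.
  by rewrite (_ : 1 - (1 - t) = t) 1?addrC //; ring.
apply: contrapT => uv.
have := sc u v nu nv uv; set m := 2^-1 *: (u + v) => hm.
have E : t *: u + (1 - t) *: v = (2 * t) *: m + (1 - 2 * t) *: v.
  rewrite /m scalerA (_ : 2 * t * 2^-1 = t); last by field.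
  by rewrite scalerDr -addrA -scalerDl; congr (_ + _ *: _); ring.
clearbody m; have := ler_normD ((2 * t) *: m) ((1 - 2 * t) *: v).
rewrite -E n1 !normrZ nv !ger0_norm; [nra | lra | lra | lra].
Qed.

Section OperatorNorm.
Variables (R : realType) (X Y : normedModType R).
Implicit Types (S T : X -> Y).

Lemma BJ_basis_bounded S (x y : X) :
  dim_two X -> is_linear_map S -> `|x| = 1 -> BJ_orth x y -> `|y| = 1 ->
  has_ubound [set `|S z| | z in [set z : X | `|z| = 1]].
Proof.
move=> d2 lS nx bj ny.
have ind := BJ_orth_lin_indep2 nx bj (norm1_neq0 ny).
have [fx [fy c]] := dim_two_coordinates d2 ind.
exists (`|S x| + 2 * `|S y|) => _ [z nz <-].
have Ha : `|fx z| <= 1 by rewrite -nz {2}(coordE c z); exact: BJ_orth_coef.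
have Hb : `|fy z| <= 2.
  have E : fy z *: y = z - fx z *: x.
    by rewrite {2}(coordE c z) addrAC subrr add0r.
  have -> : `|fy z| = `|fy z *: y| by rewrite normrZ ny mulr1.
  rewrite E; apply: le_trans (ler_normB _ _) _.
  by rewrite normrZ nx mulr1 nz; lra.
rewrite (coord_lin_mapE c lS); apply: le_trans (ler_normD _ _) _.
rewrite !normrZ; apply: lerD; last exact: ler_wpM2r.
by rewrite -[X in _ <= X]mul1r; apply: ler_wpM2r.
Qed.

(* [opnorm] is a [sup], so it carries no information on an unbounded image. *)
Lemma opnorm_le1_nonexpansive S :
  is_linear_map S -> has_ubound [set `|S z| | z in [set z : X | `|z| = 1]] ->
  opnorm S <= 1 -> nonexpansive S.
Proof.
move=> lS hub n1 z.
have [->|z0] := eqVneq z 0; first by rewrite lin_map0 // !normr0.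
have nz : `|z| != 0 by rewrite normr_eq0.
have {1}-> : z = `|z| *: (`|z|^-1 *: z) by rewrite scalerA mulfV // scale1r.
rewrite lin_mapZ // normrZ normr_id -[leRHS]mulr1 ler_wpM2l //.
apply: le_trans n1; apply: ub_le_sup => //.
by exists (`|z|^-1 *: z) => //=; exact: normfZV.
Qed.

Lemma nonexpansive_opnorm_le1 S (x : X) :
  `|x| = 1 -> nonexpansive S -> opnorm S <= 1.
Proof.
move=> nx bS; apply: ge_sup; first by exists `|S x|, x.
by move=> _ [z nz <-]; rewrite -nz.
Qed.

Lemma norm_attainment_strict T (x y : X) :
  is_linear_map T -> nonexpansive T -> opnorm T = 1 ->
  norm_attainment_set T = [set x; - x] -> lin_indep2 x y ->
  forall a b, b != 0 -> `|T (a *: x + b *: y)| < `|a *: x + b *: y|.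
Proof.
move=> lT bT nT MT ind a b b0; set z := a *: x + b *: y.
rewrite lt_neqAle bT andbT; apply/eqP => Ez.
have z0 : z != 0.
  by apply: contra_neq b0 => z0; have [] := ind a b z0.
have nz : `|z| != 0 by rewrite normr_eq0.
have Ez' : z = `|z| *: (`|z|^-1 *: z) by rewrite scalerA mulfV // scale1r.
have : norm_attainment_set T (`|z|^-1 *: z).
  by split; rewrite ?normfZV // nT lin_mapZ // normrZ normfV normr_id Ez mulVf.
rewrite MT => -[E|E].
  have : z = `|z| *: x + 0 *: y by rewrite scale0r addr0 {1}Ez' E.
  by move/(lin_indep2_coefP ind) => [_ /eqP]; rewrite (negbTE b0).
have : z = (- `|z|) *: x + 0 *: y.
  by rewrite scale0r addr0 {1}Ez' E scaleNr scalerN.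
by move/(lin_indep2_coefP ind) => [_ /eqP]; rewrite (negbTE b0).
Qed.

Lemma rank_two_image_neq0 T (x y : X) :
  dim_two X -> lin_indep2 x y -> is_linear_map T -> rank_two T -> T y != 0.
Proof.
move=> d2 ind lT [[u [v iuv]] _]; apply/eqP => Ty0.
have [fx [fy c]] := dim_two_coordinates d2 ind.
have Tz z : T z = fx z *: T x by rewrite (coord_lin_mapE c lT) Ty0 scaler0 addr0.
have [_ /eqP] : fx v = 0 /\ - fx u = 0.
  by apply: iuv; rewrite (Tz u) (Tz v) !scalerA mulrC mulNr scaleNr subrr.
rewrite oppr_eq0 => /eqP fu0.
by move/lin_indep2_neq0: iuv; rewrite (Tz u) fu0 scale0r eqxx.
Qed.

End OperatorNorm.

Lemma convex_comb_eq1_gt1 (R : realFieldType) (t a b : R) :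
  0 < t < 1 -> t * a + (1 - t) * b = 1 -> a != b -> 1 < a \/ 1 < b.
Proof.
move=> /andP[t0 t1] E ab.
have [a1|a1] := ltrP 1 a; first by left.
have [b1|b1] := ltrP 1 b; first by right.
suff [a1' b1'] : a = 1 /\ b = 1 by rewrite a1' b1' eqxx in ab.
by split; apply/le_anti; rewrite ?a1 ?b1 /=; nra.
Qed.

Lemma nonexpansive_CPP (R : realType) (X Y : normedModType R) (S : X -> Y)
    (x y : X) (p q : Y) (be : R) :
  is_linear_map S -> nonexpansive S -> `|x| = 1 -> `|p| = 1 ->
  BJ_orth x y -> `|y| = 1 -> BJ_orth p q -> q != 0 ->
  S x = p -> S y = be *: q -> 1 < be ->
  exists mu : R, `|q| < mu /\ mu_CPP x p y (`|q|^-1 *: q) mu.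
Proof.
move=> lS bS nx np bj ny bjq q0 Sx Sy be1.
have q_gt0 : 0 < `|q| by rewrite normr_gt0.
exists (be * `|q|); split; first nra.
split.
  split; [done | done | by split | split | ].
  - exact: BJ_orthZ.
  - exact: normfZV.
  - by rewrite mulr_gt0 // (lt_trans ltr01).
exists 1; split => // a b _ nab.
have -> : a *: p + (b * (be * `|q|)) *: (`|q|^-1 *: q) = S (a *: x + b *: y).
  rewrite lin_map_comb // Sx Sy !scalerA; congr (_ + _ *: _).
  by field; rewrite gt_eqF.
by rewrite -nab.
Qed.

Lemma continuous_norm_affine (R : realType) (V : normedModType R) (p q : V) :
  continuous (fun t : R => `|t *: q + p|).
Proof.
move=> t; apply: (continuous_comp (f := fun t : R => t *: q + p)).
  by apply: continuousD; [exact: scalel_continuous | exact: cst_continuous].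
exact: norm_continuous.
Qed.

Lemma continuous_neg_gap (R : realType) (g : R -> R) (a b : R) :
  a <= b -> continuous g -> (forall t, a <= t <= b -> g t < 0) ->
  exists2 eta, 0 < eta & forall t, a <= t <= b -> g t <= - eta.
Proof.
move=> ab cg neg.
have [c] := EVT_max ab (continuous_subspaceT cg).
rewrite in_itv /= => cab max; exists (- g c); first by rewrite oppr_gt0 neg.
by move=> t tab; rewrite opprK max // in_itv.
Qed.

Lemma norm_comb_le_of_unit (R : realType) (X Y : normedModType R)
    (u v : X) (p q : Y) :
  (forall t, `|t| <= 1 -> `|p + t *: q| <= `|u + t *: v|) ->
  (forall a, `|a| <= 1 -> `|a *: p + q| <= `|a *: u + v|) ->
  forall a b, `|a *: p + b *: q| <= `|a *: u + b *: v|.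
Proof.
move=> Hp Hq a b; have [ba|ab] := lerP `|b| `|a|.
  have [a0|a0] := eqVneq a 0.
    move: ba; rewrite a0 normr0 normr_le0 => /eqP ->.
    by rewrite !scale0r addr0 normr0.
  rewrite !(scale_combE _ _ _ a0) !normrZ ler_wpM2l // Hp //.
  by rewrite normrM normfV ler_pdivrMr ?normr_gt0 // mul1r.
have b0 : b != 0 by rewrite -normr_gt0; apply: le_lt_trans ab.
rewrite ![a *: _ + _]addrC !(scale_combE _ _ _ b0) !normrZ ler_wpM2l //.
rewrite ![_ + (a / b) *: _]addrC Hq //.
by rewrite normrM normfV ler_pdivrMr ?normr_gt0 // mul1r ltW.
Qed.

Section MinimalAttainment.
Variables (R : realType) (X Y : normedModType R) (T : X -> Y) (x y : X).
Hypotheses (d2X : dim_two X) (lT : is_linear_map T) (bT : nonexpansive T).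
Hypotheses (nx : `|x| = 1) (nTx : `|T x| = 1) (bj : BJ_orth x y) (ny : `|y| = 1).
Hypothesis Ty0 : T y != 0.

Lemma opnorm_le1_nonexpansive_plane (S : X -> Y) :
  is_linear_map S -> opnorm S <= 1 -> nonexpansive S.
Proof.
by move=> lS; apply/opnorm_le1_nonexpansive/(BJ_basis_bounded d2X lS nx bj ny).
Qed.

Section Decomposition.
Hypotheses (smX : smooth X) (d2Y : dim_two Y) (smY : smooth Y).
Hypothesis scY : strictly_convex Y.

Lemma BJ_orth_image_fixed (S : X -> Y) :
  is_linear_map S -> nonexpansive S -> S x = T x -> BJ_orth (T x) (S y).
Proof.
move=> lS bS Sx; rewrite -Sx.
apply: smooth_nonexpansive_BJ_orth => //; first by rewrite Sx.
exact: norm1_neq0 ny.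
Qed.

Lemma image_fixed_on_line (S : X -> Y) :
  is_linear_map S -> nonexpansive S -> S x = T x ->
  exists be : R, S y = be *: T y.
Proof.
move=> lS bS Sx; apply: (smooth_BJ_orth_line d2Y smY nTx) => //.
- exact: BJ_orth_image_fixed.
- exact: BJ_orth_image_fixed.
Qed.

Lemma decomposition_CPP (T1 T2 : X -> Y) t :
  is_linear_map T1 -> is_linear_map T2 -> opnorm T1 <= 1 -> opnorm T2 <= 1 ->
  0 < t < 1 -> T = (fun z => t *: T1 z + (1 - t) *: T2 z) -> T1 <> T2 ->
  exists mu : R, `|T y| < mu /\ mu_CPP x (T x) y (`|T y|^-1 *: T y) mu.
Proof.
move=> l1 l2 n1 n2 t01 HT T12.
have b1 := opnorm_le1_nonexpansive_plane l1 n1.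
have b2 := opnorm_le1_nonexpansive_plane l2 n2.
have HTz z : T z = t *: T1 z + (1 - t) *: T2 z by rewrite HT.
have E12 : T1 x = T2 x.
  apply: (strictly_convex_comb_norm1 scY _ _ t01); rewrite -?HTz // -nx.
  - exact: b1.
  - exact: b2.
have E1 : T1 x = T x by rewrite HTz -E12 -scalerDl addrC subrK scale1r.
have E2 : T2 x = T x by rewrite -E12.
have [be1 Hb1] := image_fixed_on_line l1 b1 E1.
have [be2 Hb2] := image_fixed_on_line l2 b2 E2.
have Hsum : t * be1 + (1 - t) * be2 = 1.
  have : (t * be1 + (1 - t) * be2 - 1) *: T y = 0.
    by rewrite scalerBl scalerDl -!scalerA -Hb1 -Hb2 -HTz scale1r subrr.
  by move/eqP; rewrite scaler_eq0 (negbTE Ty0) orbF subr_eq0 => /eqP.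
have be12 : be1 != be2.
  apply/eqP => Eb; apply: T12; apply/funext => z.
  have ind := BJ_orth_lin_indep2 nx bj (norm1_neq0 ny).
  have [fx [fy c]] := dim_two_coordinates d2X ind.
  by rewrite (coord_lin_mapE c l1) (coord_lin_mapE c l2) E1 E2 Hb1 Hb2 Eb.
have orthT : BJ_orth (T x) (T y) by apply: BJ_orth_image_fixed.
have [gt1|gt1] := convex_comb_eq1_gt1 t01 Hsum be12.
- exact: (nonexpansive_CPP l1 b1 nx nTx bj ny orthT Ty0 E1 Hb1).
- exact: (nonexpansive_CPP l2 b2 nx nTx bj ny orthT Ty0 E2 Hb2).
Qed.

Lemma not_extreme_CPP :
  opnorm T = 1 -> ~ extreme_contraction T ->
  exists mu : R, `|T y| < mu /\ mu_CPP x (T x) y (`|T y|^-1 *: T y) mu.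
Proof.
move=> nT Hne; apply: contrapT => Hno; apply: Hne.
split => // T1 T2 t l1 l2 n1 n2 t01 HT; apply: contrapT => T12; apply: Hno.
exact: (decomposition_CPP l1 l2 n1 n2 t01 HT).
Qed.

End Decomposition.

(* Rescaled to the unit sphere, [x + t y] lies within [2 |t|] of [x]. *)
Lemma CPP_line_bound (w : Y) (mu r : R) :
  (forall a b, `|a *: x + b *: y - x| < r -> `|a *: x + b *: y| = 1 ->
     `|a *: T x + (b * mu) *: w| <= 1) ->
  forall t, 2 * `|t| < r -> `|T x + (t * mu) *: w| <= `|x + t *: y|.
Proof.
move=> Hc t tr.
have N1 : 1 <= `|x + t *: y|.
  by have := BJ_orth_coef 1 t nx bj; rewrite scale1r normr1.
have N2 : `|x + t *: y| <= 1 + `|t|.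
  by apply: le_trans (ler_normD _ _) _; rewrite normrZ ny mulr1 nx.
set N := `|x + t *: y| in N1 N2 *.
have Np : 0 < N by lra.
have Nn : N != 0 by rewrite gt_eqF.
have Eu : N^-1 *: x + (t * N^-1) *: y = N^-1 *: (x + t *: y).
  by rewrite scalerDr scalerA mulrC.
have nu : `|N^-1 *: x + (t * N^-1) *: y| = 1.
  by rewrite Eu normrZ normfV (gtr0_norm Np) mulVf.
have du : `|N^-1 *: x + (t * N^-1) *: y - x| < r.
  have -> : N^-1 *: x + (t * N^-1) *: y - x = N^-1 *: ((1 - N) *: x + t *: y).
    by rewrite Eu scalerBl scale1r addrAC scalerBr scalerA mulVf // scale1r.
  rewrite normrZ normfV (gtr0_norm Np).
  have : `|(1 - N) *: x + t *: y| <= N - 1 + `|t|.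
    apply: le_trans (ler_normD _ _) _.
    by rewrite !normrZ nx ny !mulr1 ler0_norm; lra.
  set V := `|_ + _|; have V0 : 0 <= V by exact: normr_ge0.
  have Hq : N * (N^-1 * V) = V by rewrite mulrA mulfV // mul1r.
  have : 0 <= N^-1 * V by rewrite mulr_ge0 // invr_ge0 ltW.
  nra.
have := Hc _ _ du nu.
have -> : N^-1 *: T x + (t * N^-1 * mu) *: w = N^-1 *: (T x + (t * mu) *: w).
  by rewrite scalerDr scalerA; congr (_ + _ *: _); ring.
rewrite normrZ normfV (gtr0_norm Np) -(ler_pM2l Np) mulrA mulfV //.
by rewrite mul1r mulr1.
Qed.

(* Interpolate between [T x] and the CPP bound, using [|T x| = 1 <= |x + t y|]. *)
Lemma CPP_near_bound (w : Y) (mu r : R) :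
  0 < mu ->
  (forall a b, `|a *: x + b *: y - x| < r -> `|a *: x + b *: y| = 1 ->
     `|a *: T x + (b * mu) *: w| <= 1) ->
  forall t nu, 2 * `|t| < r -> 0 <= nu <= mu ->
  `|T x + (t * nu) *: w| <= `|x + t *: y|.
Proof.
move=> mu0 Hc t nu tr /andP[nu0 numu].
have N1 : 1 <= `|x + t *: y|.
  by have := BJ_orth_coef 1 t nx bj; rewrite scale1r normr1.
have HM := CPP_line_bound Hc tr.
set th := nu / mu.
have th0 : 0 <= th by rewrite divr_ge0 // ltW.
have th1 : th <= 1 by rewrite ler_pdivrMr // mul1r.
have -> : T x + (t * nu) *: w = (1 - th) *: T x + th *: (T x + (t * mu) *: w).
  rewrite scalerDr scalerA addrA -scalerDl subrK scale1r; congr (_ + _ *: _).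
  by rewrite /th; field; rewrite gt_eqF.
apply: le_trans (ler_normD _ _) _.
rewrite (normrZ (1 - th)) (normrZ th) nTx mulr1 (ger0_norm th0).
rewrite ger0_norm; [nra | lra].
Qed.

Section Perturbation.
Hypothesis Tstrict :
  forall a b, b != 0 -> `|T (a *: x + b *: y)| < `|a *: x + b *: y|.

(* Compactness of [d <= |t| <= 1] makes the strict inequality uniform. *)
Lemma strict_gap (d : R) :
  0 < d <= 1 ->
  exists2 eta, 0 < eta &
   (forall t, d <= `|t| <= 1 -> `|T x + t *: T y| <= `|x + t *: y| - eta) /\
   (forall a, `|a| <= 1 -> `|a *: T x + T y| <= `|a *: x + y| - eta).
Proof.
move=> /andP[d0 d1].
pose g1 t := `|t *: T y + T x| - `|t *: y + x|.
pose g2 t := `|t *: T x + T y| - `|t *: x + y|.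
have cg1 : continuous g1 by move=> t; apply: cvgB; exact: continuous_norm_affine.
have cg2 : continuous g2 by move=> t; apply: cvgB; exact: continuous_norm_affine.
have g1_lt0 t : t != 0 -> g1 t < 0.
  move=> t0; rewrite /g1 subr_lt0 ![t *: _ + _]addrC.
  by have := Tstrict 1 t0; rewrite lin_map_comb // !scale1r.
have g2_lt0 t : g2 t < 0.
  have := Tstrict t (oner_neq0 R).
  by rewrite /g2 subr_lt0 lin_map_comb // !scale1r.
have [e1 e1_gt0 H1] : exists2 e, 0 < e & forall t, d <= t <= 1 -> g1 t <= - e.
  apply: continuous_neg_gap => // t /andP[dt _].
  by apply: g1_lt0; rewrite gt_eqF // (lt_le_trans d0).
have [e2 e2_gt0 H2] : exists2 e, 0 < e & forall t, -1 <= t <= - d -> g1 t <= - e.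
  apply: continuous_neg_gap => [||t /andP[_ td]]; [lra | done |].
  by apply: g1_lt0; rewrite lt_eqF //; lra.
have [e3 e3_gt0 H3] : exists2 e, 0 < e & forall t, -1 <= t <= 1 -> g2 t <= - e.
  by apply: continuous_neg_gap => //; lra.
set eta := Num.min e1 (Num.min e2 e3).
have [m1 m2 m3] : [/\ eta <= e1, eta <= e2 & eta <= e3].
  by split; rewrite !ge_min lexx ?orbT.
exists eta; first by rewrite !lt_min e1_gt0 e2_gt0.
split.
- move=> t /andP[dt t1]; rewrite [T x + _]addrC [x + _]addrC.
  have [t0|t0] := lerP 0 t.
    by have := H1 t; rewrite -(ger0_norm t0) dt t1 /g1 => /(_ isT); lra.
  have := H2 t; rewrite ltr0_norm // in dt t1.
  by rewrite /g1 => /(_ _); lra.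
- move=> a; rewrite ler_norml => a1.
  by have := H3 a a1; rewrite /g2; lra.
Qed.

(* Take [e] below the gap [eta] of [strict_gap] and below [mu - |T y|]: slopes
   [|t| < d] are then covered by the CPP, all others by the gap. *)
Lemma CPP_perturbation (w : Y) (mu r : R) :
  `|w| = 1 -> T y = `|T y| *: w -> `|T y| < mu -> 0 < r ->
  (forall a b, `|a *: x + b *: y - x| < r -> `|a *: x + b *: y| = 1 ->
     `|a *: T x + (b * mu) *: w| <= 1) ->
  exists2 e, 0 < e & forall nu, `|nu - `|T y| | <= e ->
    forall a b, `|a *: T x + b *: (nu *: w)| <= `|a *: x + b *: y|.
Proof.
move=> nw Tyw smu r0 Hc.
have s0 : 0 < `|T y| by rewrite normr_gt0.
set s := `|T y| in Tyw smu s0 *.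
set d := Num.min (r / 4) 1.
have d0 : 0 < d by rewrite lt_min ltr01 andbT divr_gt0.
have d01 : 0 < d <= 1 by rewrite d0 ge_min lexx orbT.
have [eta eta0 [F1 F2]] := strict_gap d01.
set e := Num.min eta (Num.min s (mu - s)).
have [e1 e2 e3] : [/\ e <= eta, e <= s & e <= mu - s].
  by split; rewrite !ge_min lexx ?orbT.
exists e; first by rewrite !lt_min eta0 s0 subr_gt0 smu.
move=> nu; rewrite ler_norml => /andP[nu1 nu2].
apply: norm_comb_le_of_unit => [t t1|a a1]; rewrite ?scalerA.
- have [td|td] := ltrP `|t| d.
    apply: (CPP_near_bound _ Hc); first lra.
    + by move: td; rewrite lt_min => /andP[+ _]; lra.
    + by apply/andP; split; lra.
  have := F1 t; rewrite td t1 => /(_ isT).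
  have -> : T x + (t * nu) *: w = (T x + t *: T y) + (t * (nu - s)) *: w.
    by rewrite Tyw scalerA -addrA -scalerDl; congr (_ + _ *: _); ring.
  move=> h; apply: le_trans (ler_normD _ _) _.
  rewrite normrZ nw mulr1 normrM.
  have : `|t| * `|nu - s| <= eta.
    by rewrite -[eta]mul1r ler_pM // ler_norml; apply/andP; split; lra.
  lra.
- have := F2 a a1.
  have -> : a *: T x + nu *: w = (a *: T x + T y) + (nu - s) *: w.
    by rewrite Tyw -addrA -scalerDl; congr (_ + _ *: _); ring.
  move=> h; apply: le_trans (ler_normD _ _) _.
  have : `|nu - s| <= eta by rewrite ler_norml; apply/andP; split; lra.
  by rewrite normrZ nw mulr1; lra.
Qed.

Lemma CPP_not_extreme :
  (exists mu : R, `|T y| < mu /\ mu_CPP x (T x) y (`|T y|^-1 *: T y) mu) ->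
  ~ extreme_contraction T.
Proof.
move=> [mu [smu [_ [r [r0 Hc]]]]] [_ ext].
have nw : `| `|T y|^-1 *: T y| = 1 by exact: normfZV.
have Tyw : T y = `|T y| *: (`|T y|^-1 *: T y).
  by rewrite scalerA mulfV ?normr_eq0 // scale1r.
set w := `|T y|^-1 *: T y in nw Tyw Hc.
have [e e0 key] := CPP_perturbation nw Tyw smu r0 Hc.
set s := `|T y| in Tyw key; clearbody w s.
have ind := BJ_orth_lin_indep2 nx bj (norm1_neq0 ny).
have [fx [fy c]] := dim_two_coordinates d2X ind.
pose Tnu nu z := fx z *: T x + fy z *: (nu *: w).
have nTnu nu : `|nu - s| <= e -> opnorm (Tnu nu) <= 1.
  move=> hnu; apply: (nonexpansive_opnorm_le1 nx) => z.
  by rewrite [X in _ <= `|X|](coordE c z); exact: key.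
have : Tnu (s + e) = Tnu (s - e).
  apply: (ext _ _ 2^-1); try exact: coord_lin_map c.
  - by apply: nTnu; rewrite addrAC subrr add0r ger0_norm // ltW.
  - by apply: nTnu; rewrite addrAC subrr add0r normrN ger0_norm // ltW.
  - by apply/andP; split; lra.
  - apply/funext => z; rewrite /Tnu (coord_lin_mapE c lT z) Tyw.
    rewrite !scalerDr !scalerA addrACA -!scalerDl.
    by congr (_ *: _ + _ *: _); [rewrite addrC subrK scale1r | field].
move/(congr1 (fun f => f y)); rewrite /Tnu (coord_uv c) (coord_vv c).
have w0 : w != 0 by rewrite -normr_eq0 nw oner_eq0.
rewrite !scale0r !add0r !scale1r => /eqP.
rewrite -subr_eq0 -scalerBl scaler_eq0.
rewrite (negbTE w0) orbF (_ : s + e - (s - e) = 2 * e); last ring.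
by rewrite mulf_eq0 pnatr_eq0 orFb gt_eqF.
Qed.

End Perturbation.

End MinimalAttainment.

Theorem mainTheorem15 (R : realType) (X Y : completeNormedModType R)
  (T : X -> Y) (x y : X) :
  dim_two X -> dim_two Y -> smooth X -> smooth Y -> strictly_convex Y ->
  is_linear_map T -> rank_two T -> opnorm T = 1 ->
  norm_attainment_set T = [set x; - x] ->
  BJ_orth x y -> `|y| = 1 ->
  (0 < `|T y| < 1) /\
  (~ extreme_contraction T <->
   exists mu : R, `|T y| < mu /\
     mu_CPP x (T x) y (`|T y|^-1 *: T y) mu).
Proof.
move=> d2X d2Y smX smY scY lT rkT nT MT bj ny.
have [nx nTx] : `|x| = 1 /\ `|T x| = 1.
  by have [-> ->] : norm_attainment_set T x by rewrite MT; left.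
have bT : nonexpansive T.
  by apply: (opnorm_le1_nonexpansive_plane d2X nx bj ny lT); rewrite nT.
have ind := BJ_orth_lin_indep2 nx bj (norm1_neq0 ny).
have Ty0 := rank_two_image_neq0 d2X ind lT rkT.
have Tstrict := norm_attainment_strict lT bT nT MT ind.
split.
  rewrite normr_gt0 Ty0 /=.
  by have := Tstrict 0 1 (oner_neq0 R); rewrite scale0r add0r scale1r ny.
split.
  exact: (not_extreme_CPP d2X lT bT nx nTx bj ny Ty0 smX d2Y smY scY nT).
exact: (CPP_not_extreme d2X lT nx nTx bj ny Ty0 Tstrict).
Qed.
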